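(* Let $q\in\mathbb{C}$ with $0<|q|<1$ and $m,n\in\mathbb{N}$. Then \[ \frac{1}{(q)_\infty}\sum_{k=0}^\infty\frac{q^{k^2}}{(q)_k (q)_{n-k}(q)_{m-k}} =\frac{1}{(q)_m(q)_n} \sum_{k=0}^{\infty}\frac{q^{k^2}(q)_{m+n+k}}{(q)_k (q)_{m+k}(q)_{n+k}}, \] and \[ \frac{1}{(q)_\infty}\sum_{k=0}^\infty\frac{q^{k^2+k}}{(q)_k (q)_{n-k}(q)_{m-k}} =\frac{1}{(q)_m(q)_n} \sum_{k=0}^{\infty}\frac{q^{k^2+k}(q)_{m+n+k+1}}{(q)_k (q)_{m+k+1}(q)_{n+k+1}}. \]
   Context: $(q)_n=(1-q)(1-q^2)\cdots(1-q^n)$ for $n\ge0$ (with $(q)_0=1$), $1/(q)_n=0$ for $n<0$, and $(q)_\infty=\prod_{i\ge1}(1-q^i)$. *)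

From Stdlib Require Import Reals.
From Coquelicot Require Import Coquelicot.

Open Scope C_scope.

Fixpoint Cpown (x : C) (n : nat) : C :=
  match n with
  | O => 1
  | S n' => x * Cpown x n'
  end.

Fixpoint qpoch (q : C) (n : nat) : C :=
  match n with
  | O => 1
  | S n' => qpoch q n' * (1 - Cpown q (S n'))
  end.

(* 1/(q)_(n-k) for integer n-k, with the convention 1/(q)_j = 0 for j < 0 *)
Definition qpoch_inv_diff (q : C) (n k : nat) : C :=
  if Nat.leb k n then / qpoch q (n - k) else 0.

Definition is_qpoch_inf (q : C) (P : C) : Prop :=
  filterlim (fun N => qpoch q N) eventually (locally P).

(* Put [L_j(m,n) = (q)_m (q)_n sum_k q^(k^2+jk) / ((q)_k (q)_(n-k) (q)_(m-k))]
   and [R_j(m,n) = (q)_oo sum_k q^(k^2+jk) (q)_(m+n+k+j) / ((q)_k (q)_(m+k+j) (q)_(n+k+j))];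
   the theorem says [L_j = R_j] for [j = 0, 1].  Both families satisfy
     [F_0(m+1,n+1) = F_0(m,n+1) + q^(m+1) (1 - q^(n+1)) F_1(m,n)],
     [F_1(m,n+1)   = q^(n+1) F_0(m,n+1) + (1 - q^(n+1)) F_1(m,n)],
   termwise for [L], and for [R] up to a telescoping series in the second relation.  These
   relations determine [F] from its values on [m = 0] and [n = 0], which are all [1]: for [L]
   trivially, for [R] by Durfee's identity [sum_k q^(k^2) / (q)_k^2 = 1 / (q)_oo] and the second
   relation at [m = n = 0].  Durfee's identity is the limit [N -> oo] of the finite identity
   [sum_k q^(k^2+jk) (q)_N / ((q)_k (q)_(N-k) (q)_(k+j)) = 1 / (q)_(N+j)], proved by induction on
   [N].  All limits are controlled by [exp (- r/(1-r)^2) <= |(q)_k| <= exp (r/(1-r))], [r = |q|]. *)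

From Stdlib Require Import Reals Lra Lia Psatz.
From Coquelicot Require Import Coquelicot.
Open Scope C_scope.

Lemma Cpown_add q a b : Cpown q (a + b) = Cpown q a * Cpown q b.
Proof. induction a as [|a IH]; simpl; [ring | rewrite IH; ring]. Qed.

Lemma Cmod_Cpown q n : Cmod (Cpown q n) = (Cmod q ^ n)%R.
Proof. induction n as [|n IH]; simpl; [apply Cmod_1 | rewrite Cmod_mult, IH; reflexivity]. Qed.

Lemma qpoch_0 q : qpoch q 0 = 1.
Proof. reflexivity. Qed.

Lemma qpoch_S q n : qpoch q (S n) = qpoch q n * (1 - Cpown q (S n)).
Proof. reflexivity. Qed.

Lemma qpoch_inv_diff_SS q n k : qpoch_inv_diff q (S n) (S k) = qpoch_inv_diff q n k.
Proof. reflexivity. Qed.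

Lemma qpoch_inv_diff_0 q n : qpoch_inv_diff q n 0 = / qpoch q n.
Proof. unfold qpoch_inv_diff. now rewrite Nat.sub_0_r. Qed.

Lemma qpoch_inv_diff_add q M k : qpoch_inv_diff q (M + k) k = / qpoch q M.
Proof.
  unfold qpoch_inv_diff. rewrite (proj2 (Nat.leb_le k (M + k))) by lia.
  now rewrite Nat.add_sub.
Qed.

Lemma qpoch_inv_diff_gt q n k : (n < k)%nat -> qpoch_inv_diff q n k = 0.
Proof. intros Hk. unfold qpoch_inv_diff. now rewrite (proj2 (Nat.leb_gt k n) Hk). Qed.

Lemma exp_le_exp (x y : R) : (x <= y)%R -> (exp x <= exp y)%R.
Proof. intros [H|H]; [left; now apply exp_increasing | right; now rewrite H]. Qed.

Lemma exp_neg_le_one_sub (r x : R) :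
  (0 <= x <= r)%R -> (r < 1)%R -> (exp (- (x / (1 - r))) <= 1 - x)%R.
Proof.
  intros Hx Hr. set (y := (x / (1 - r))%R).
  assert (Hy : (0 <= y)%R) by (apply Rdiv_le_0_compat; lra).
  assert (Hxy : (x * (1 + y) <= y)%R).
  { unfold y. apply Rmult_le_reg_r with (1 - r)%R; [lra|]. field_simplify; nra. }
  assert (Hexp : (exp (- y) * exp y = 1)%R) by (rewrite <- exp_plus, Rplus_opp_l; apply exp_0).
  pose proof (exp_ineq1_le y). pose proof (exp_pos (- y)). nra.
Qed.

Lemma pow_le_pow_le1 (x : R) a b :
  (0 <= x <= 1)%R -> (a <= b)%nat -> (x ^ b <= x ^ a)%R.
Proof.
  intros Hx Hab. replace b with (a + (b - a))%nat by lia. rewrite pow_add.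
  pose proof (pow_le x a (proj1 Hx)).
  pose proof (pow_le x (b - a) (proj1 Hx)).
  pose proof (pow_incr x 1 (b - a) Hx) as H1. rewrite pow1 in H1. nra.
Qed.

Lemma Rmult_le_compat_nonneg (a b c d : R) :
  (0 <= a <= b)%R -> (0 <= c <= d)%R -> (0 <= a * c <= b * d)%R.
Proof. intros. split; [apply Rmult_le_pos | apply Rmult_le_compat]; lra. Qed.

Lemma Cmod_one_sub_ge (z : C) : (1 - Cmod z <= Cmod (1 - z))%R.
Proof.
  pose proof (Cmod_triangle (1 - z) z) as H.
  replace (1 - z + z) with (RtoC 1) in H by ring. rewrite Cmod_1 in H. lra.
Qed.

Lemma Cmod_one_sub_le (z : C) : (Cmod (1 - z) <= 1 + Cmod z)%R.
Proof. pose proof (Cmod_triangle 1 (- z)) as H. rewrite Cmod_1, Cmod_opp in H. exact H. Qed.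

Lemma Cmod_sum_n_le (f : nat -> C) (K r : R) N :
  (0 <= r < 1)%R -> (forall k, (k <= N)%nat -> (Cmod (f k) <= K * r ^ k)%R) ->
  (Cmod (sum_n f N) <= K / (1 - r))%R.
Proof.
  intros Hr Hf.
  assert (HK : (0 <= K)%R).
  { pose proof (Hf 0%nat (Nat.le_0_l N)) as H0. pose proof (Cmod_ge_0 (f 0%nat)).
    simpl in H0. lra. }
  enough (H : forall M, (M <= N)%nat -> (Cmod (sum_n f M) <= K * (1 - r ^ S M) / (1 - r))%R).
  { eapply Rle_trans; [apply H, Nat.le_refl|]. unfold Rdiv.
    apply Rmult_le_compat_r; [apply Rlt_le, Rinv_0_lt_compat; lra|].
    pose proof (pow_le r (S N) (proj1 Hr)). nra. }
  induction M as [|M IH]; intros HM.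
  - rewrite sum_O. eapply Rle_trans; [apply Hf; lia|]. right. simpl. field. lra.
  - rewrite sum_Sn. eapply Rle_trans; [apply Cmod_triangle|].
    eapply Rle_trans; [apply Rplus_le_compat; [apply IH; lia | apply Hf; exact HM]|].
    right. simpl. field. lra.
Qed.

Lemma sum_n_Cminus (a b : nat -> C) N : sum_n (fun k => a k - b k) N = sum_n a N - sum_n b N.
Proof.
  induction N as [|N IH]; [now rewrite !sum_O|].
  rewrite !sum_Sn, IH. change (sum_n a N - sum_n b N + (a (S N) - b (S N))
    = sum_n a N + a (S N) - (sum_n b N + b (S N))). ring.
Qed.

(* The sum of a convergent series; an unspecified value otherwise. *)
Definition Csum (a : nat -> C) : C := @iota C_CompleteNormedModule (is_series a).

Lemma Csum_eq (a : nat -> C) (l : C) : is_series a l -> Csum a = l.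
Proof. exact (iota_filterlim_locally (sum_n a) l). Qed.

Lemma is_series_Csum (a : nat -> C) : ex_series a -> is_series a (Csum a).
Proof. intros [l Hl]. now rewrite (Csum_eq _ _ Hl). Qed.

Lemma is_series_C_unique (a : nat -> C) (l l' : C) : is_series a l -> is_series a l' -> l = l'.
Proof. intros H H'. now rewrite <- (Csum_eq _ _ H), <- (Csum_eq _ _ H'). Qed.

Lemma is_series_Cplus (a b : nat -> C) la lb :
  is_series a la -> is_series b lb -> is_series (fun k => a k + b k) (la + lb).
Proof. exact (is_series_plus a b la lb). Qed.

Lemma is_series_Cmult_l (c : C) (a : nat -> C) l :
  is_series a l -> is_series (fun k => c * a k) (c * l).
Proof. exact (is_series_scal c a l). Qed.

Lemma is_series_finite (a : nat -> C) N :
  (forall k, (N < k)%nat -> a k = 0) -> is_series a (sum_n a N).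
Proof.
  intros Ha. apply filterlim_ext_loc with (fun _ => sum_n a N); [|apply filterlim_const].
  exists N. intros M HM. induction HM as [|M HM IH]; [reflexivity|].
  rewrite sum_Sn, <- IH, Ha by lia. exact (eq_sym (Cplus_0_r _)).
Qed.

Lemma filterlim_Cmult (f g : nat -> C) (a b : C) :
  filterlim f eventually (locally a) -> filterlim g eventually (locally b) ->
  filterlim (fun N => f N * g N) eventually (locally (a * b)).
Proof.
  intros Hf Hg.
  (* [locally] on [C] uses the product uniformity, [filterlim_scal] the norm of [C_AbsRing]. *)
  assert (Hf' : filterlim f eventually (@locally (AbsRing_UniformSpace C_AbsRing) a)).
  { intros P HP. apply Hf. apply locally_C. exact HP. }
  exact (filterlim_comp_2 f g (@scal C_AbsRing C_NormedModule) Hf' Hg (filterlim_scal a b)).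
Qed.

Lemma filterlim_geom_close (f g : nat -> C) (D : C) (K r : R) :
  (0 <= r < 1)%R -> filterlim g eventually (locally D) ->
  (forall N, (Cmod (f N - g N) <= K * r ^ N)%R) -> filterlim f eventually (locally D).
Proof.
  intros Hr Hg Hfg.
  assert (H0 : filterlim (fun N => f N - g N) eventually (locally (0 : C))).
  { apply (filterlim_norm_zero (V := C_NormedModule)).
    enough (H : is_lim_seq (fun N => Cmod (f N - g N)) 0) by exact H.
    apply (is_lim_seq_le_le (fun _ => 0%R) _ (fun N => K * r ^ N)%R).
    - intros N. split; [apply Cmod_ge_0 | apply Hfg].
    - apply is_lim_seq_const.
    - replace (Finite 0) with (Rbar_mult K 0) by (simpl; f_equal; ring).
      apply is_lim_seq_scal_l, is_lim_seq_geom. rewrite Rabs_pos_eq; lra. }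
  apply (filterlim_ext (fun N => g N + (f N - g N))); [intros N; ring|].
  refine (eq_rect _ (fun l => filterlim _ eventually (locally l))
            (filterlim_comp_2 _ _ Cplus Hg H0 (filterlim_plus (K := C_AbsRing) D (0 : C))) D _).
  exact (Cplus_0_r D).
Qed.

Lemma is_series_single (a : nat -> C) : (forall k, a (S k) = 0) -> is_series a (a O).
Proof.
  intros Ha. pose proof (is_series_finite a 0 ltac:(intros [|k] Hk; [lia | apply Ha])) as H.
  rewrite sum_O in H. exact H.
Qed.

Definition shift1 (a : nat -> C) (k : nat) : C :=
  match k with O => 0 | S k' => a k' end.

Lemma is_series_shift1 (a : nat -> C) (l : C) : is_series a l -> is_series (shift1 a) l.
Proof.
  intros Ha. apply is_series_decr_1.
  refine (eq_rect l (is_series _) Ha _ _). change (l = l + - 0). ring.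
Qed.

Lemma is_series_telescope (d : nat -> C) :
  ex_series d -> d O = 0 -> is_series (fun k => d (S k) - d k) (0 : C).
Proof.
  intros [D HD] H0.
  assert (HS : is_series (fun k => d (S k)) D).
  { apply is_series_incr_1. rewrite H0. refine (eq_rect D (is_series d) HD _ _).
    exact (eq_sym (Cplus_0_r D)). }
  replace (0 : C) with (D + -1 * D) by ring.
  eapply is_series_ext; [|exact (is_series_Cplus _ _ _ _ HS (is_series_Cmult_l (-1) _ _ HD))].
  intros k. simpl. ring.
Qed.

Lemma ex_series_geom_dominated (a : nat -> C) (K r : R) :
  (0 <= r < 1)%R -> (forall k, (Cmod (a k) <= K * r ^ k)%R) -> ex_series a.
Proof.
  intros Hr Ha. apply (ex_series_le a (fun k => K * r ^ k)%R); [exact Ha|].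
  exists (K * / (1 - r))%R.
  apply (is_series_scal (V := R_NormedModule) K (fun k => r ^ k)%R).
  apply is_series_geom. rewrite Rabs_pos_eq; lra.
Qed.

Definition qpoch_lb (r : R) : R := exp (- (r / (1 - r) ^ 2)).
Definition qpoch_ub (r : R) : R := exp (r / (1 - r)).

Definition lhs_term (q : C) (j m n k : nat) : C :=
  Cpown q (k * k + j * k) / qpoch q k * qpoch_inv_diff q n k * qpoch_inv_diff q m k.

Definition rhs_term (q : C) (j m n k : nat) : C :=
  Cpown q (k * k + j * k) * qpoch q (m + n + k + j)
    / (qpoch q k * qpoch q (m + k + j) * qpoch q (n + k + j)).

Definition durfee_term (q : C) (j N k : nat) : C :=
  Cpown q (k * k + j * k) * qpoch q N * qpoch_inv_diff q N k / (qpoch q k * qpoch q (k + j)).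

Lemma durfee_term_gt q j N k : (N < k)%nat -> durfee_term q j N k = 0.
Proof. intros Hk. unfold durfee_term. rewrite qpoch_inv_diff_gt by exact Hk. unfold Cdiv. ring. Qed.

Section Pochhammer.

Variable q : C.
Hypothesis hq : (0 < Cmod q < 1)%R.
Local Notation r := (Cmod q).

Lemma q_neq0 : q <> 0.
Proof. intros H. rewrite H, Cmod_0 in hq. lra. Qed.

Lemma Cpown_neq0 n : Cpown q n <> 0.
Proof.
  intros H. apply (f_equal Cmod) in H. rewrite Cmod_Cpown, Cmod_0 in H.
  apply (pow_nonzero r n); lra.
Qed.

Lemma one_sub_Cpown_neq0 i : (0 < i)%nat -> 1 - Cpown q i <> 0.
Proof.
  intros Hi H. pose proof (Cmod_one_sub_ge (Cpown q i)) as Hge.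
  rewrite H, Cmod_0, Cmod_Cpown in Hge.
  pose proof (pow_lt_1_compat r i ltac:(lra) Hi). lra.
Qed.

Lemma qpoch_neq0 n : qpoch q n <> 0.
Proof.
  induction n as [|n IH].
  - intros H. apply RtoC_inj in H. lra.
  - apply Cmult_neq_0; [exact IH | apply one_sub_Cpown_neq0; lia].
Qed.

Lemma Cmod_qpoch_ge k : (qpoch_lb r <= Cmod (qpoch q k))%R.
Proof.
  enough (H : (exp (- ((r - r ^ S k) / (1 - r) ^ 2)) <= Cmod (qpoch q k))%R).
  { eapply Rle_trans, H. apply exp_le_exp, Ropp_le_contravar. unfold Rdiv.
    apply Rmult_le_compat_r; [apply Rlt_le, Rinv_0_lt_compat, pow_lt; lra|].
    pose proof (pow_le r (S k) (Cmod_ge_0 q)). lra. }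
  induction k as [|k IH].
  - simpl. rewrite Cmod_1, Rmult_1_r, Rminus_diag, Rdiv_0_l, Ropp_0, exp_0. lra.
  - rewrite qpoch_S, Cmod_mult.
    pose proof (Cmod_one_sub_ge (Cpown q (S k))) as H1. rewrite Cmod_Cpown in H1.
    assert (Hrk : (0 <= r ^ S k <= r)%R).
    { split; [apply pow_le; lra|]. rewrite <- (pow_1 r) at 2.
      apply pow_le_pow_le1; [lra | lia]. }
    replace (- ((r - r ^ S (S k)) / (1 - r) ^ 2))%R
      with (- ((r - r ^ S k) / (1 - r) ^ 2) + - (r ^ S k / (1 - r)))%R
      by (simpl; field; lra).
    rewrite exp_plus. apply Rmult_le_compat; try (left; apply exp_pos); [exact IH|].
    pose proof (exp_neg_le_one_sub r (r ^ S k) Hrk ltac:(lra)). lra.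
Qed.

Lemma Cmod_qpoch_le k : (Cmod (qpoch q k) <= qpoch_ub r)%R.
Proof.
  enough (H : (Cmod (qpoch q k) <= exp ((r - r ^ S k) / (1 - r)))%R).
  { eapply Rle_trans; [exact H|]. apply exp_le_exp. unfold Rdiv.
    apply Rmult_le_compat_r; [apply Rlt_le, Rinv_0_lt_compat; lra|].
    pose proof (pow_le r (S k) (Cmod_ge_0 q)). lra. }
  induction k as [|k IH].
  - simpl. rewrite Cmod_1, Rmult_1_r, Rminus_diag, Rdiv_0_l, exp_0. lra.
  - rewrite qpoch_S, Cmod_mult.
    pose proof (Cmod_one_sub_le (Cpown q (S k))) as H1. rewrite Cmod_Cpown in H1.
    replace ((r - r ^ S (S k)) / (1 - r))%R with ((r - r ^ S k) / (1 - r) + r ^ S k)%R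
      by (simpl; field; lra).
    rewrite exp_plus. apply Rmult_le_compat; try apply Cmod_ge_0; [exact IH|].
    pose proof (exp_ineq1_le (r ^ S k)). lra.
Qed.

Local Ltac nonzero :=
  repeat split;
  solve [assumption | apply qpoch_neq0 | apply Cpown_neq0 | apply q_neq0].

(* Expands each [(q)_(i+1)] into [(q)_i (1 - q^(i+1))], recording [1 - q^(i+1) <> 0] for the
   side conditions of [field], and splits every power of [q] into a product of atoms. *)
Local Ltac qpoch_field :=
  repeat progress (cbn [Cpown Nat.add Nat.mul] in *;
                   rewrite ?Nat.add_0_r, ?Nat.add_1_r, ?Nat.add_succ_r, ?Nat.mul_0_r, ?Nat.mul_succ_r, ?qpoch_0 in * );
  repeat match goal with
  | |- context [qpoch q (S ?x)] =>
      pose proof (one_sub_Cpown_neq0 (S x) (Nat.lt_0_succ x)); rewrite (qpoch_S q x)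
  end;
  repeat progress (cbn [Cpown] in *; rewrite ?Cpown_add in * );
  field; nonzero.

(* At [k = n + 1] both sides vanish: the left one by the convention [1/(q)_(-1) = 0]. *)
Lemma qpoch_inv_diff_Sn n k :
  qpoch_inv_diff q n k = (1 - Cpown q (S n) / Cpown q k) * qpoch_inv_diff q (S n) k.
Proof.
  destruct (Nat.le_gt_cases k n) as [Hk|Hk].
  - destruct (Nat.le_exists_sub k n Hk) as [d [-> _]].
    unfold qpoch_inv_diff.
    rewrite (proj2 (Nat.leb_le k (d + k)) Hk), (proj2 (Nat.leb_le k (S (d + k)))) by lia.
    replace (d + k - k)%nat with d by lia. replace (S (d + k) - k)%nat with (S d) by lia.
    qpoch_field.
  - rewrite (qpoch_inv_diff_gt q n k Hk).
    destruct (Nat.eq_dec k (S n)) as [->|Hne].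
    + unfold Cdiv. rewrite Cinv_r by apply Cpown_neq0. ring.
    + rewrite (qpoch_inv_diff_gt q (S n) k) by lia. ring.
Qed.

Lemma qpoch_inv_diff_Sk n k :
  qpoch_inv_diff q n (S k) = (1 - Cpown q (S n) / Cpown q (S k)) * qpoch_inv_diff q n k.
Proof. rewrite qpoch_inv_diff_Sn. reflexivity. Qed.

Lemma lhs_term_rec0 m n k :
  (1 - Cpown q (S m)) * lhs_term q 0 (S m) (S n) k
  = lhs_term q 0 m (S n) k + Cpown q (S m) * shift1 (lhs_term q 1 m n) k.
Proof.
  unfold lhs_term, shift1. destruct k as [|k].
  - rewrite !qpoch_inv_diff_0. qpoch_field.
  - rewrite !qpoch_inv_diff_SS, qpoch_inv_diff_Sk. qpoch_field.
Qed.

Lemma lhs_term_rec1 m n k :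
  lhs_term q 1 m (S n) k = Cpown q (S n) * lhs_term q 0 m (S n) k + lhs_term q 1 m n k.
Proof. unfold lhs_term. rewrite (qpoch_inv_diff_Sn n k). qpoch_field. Qed.

Lemma rhs_term_rec0 m n k :
  rhs_term q 0 (S m) (S n) k
  = rhs_term q 0 m (S n) k + Cpown q (S m) * (1 - Cpown q (S n)) * rhs_term q 1 m n k.
Proof. unfold rhs_term. qpoch_field. Qed.

Definition rhs_rec1_defect m n k : C :=
  Cpown q (S n) * (1 - Cpown q k) * rhs_term q 0 m (S n) k.

Lemma rhs_term_rec1 m n k :
  rhs_term q 1 m (S n) k
  = Cpown q (S n) * rhs_term q 0 m (S n) k + (1 - Cpown q (S n)) * rhs_term q 1 m n k
    + (rhs_rec1_defect m n (S k) - rhs_rec1_defect m n k).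
Proof. unfold rhs_rec1_defect, rhs_term. qpoch_field. Qed.

Lemma rhs_term_n0 j m k : rhs_term q j m 0 k = rhs_term q j 0 0 k.
Proof. unfold rhs_term. qpoch_field. Qed.

Lemma rhs_term_0n j n k : rhs_term q j 0 n k = rhs_term q j 0 0 k.
Proof. unfold rhs_term. qpoch_field. Qed.

Lemma durfee_term_S j N k :
  durfee_term q j (S N) k
  = durfee_term q j N k + Cpown q (S (N + j)) * shift1 (durfee_term q (S j) N) k.
Proof.
  unfold durfee_term, shift1. destruct k as [|k].
  - rewrite !qpoch_inv_diff_0. qpoch_field.
  - rewrite qpoch_inv_diff_SS, qpoch_inv_diff_Sk. qpoch_field.
Qed.

Lemma pow_Cmod_le k e : (k <= e)%nat -> (0 <= r ^ e <= r ^ k)%R.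
Proof. intros Hke. split; [apply pow_le, Cmod_ge_0 | apply pow_le_pow_le1; [lra | exact Hke]]. Qed.

Lemma qpoch_lb_pos : (0 < qpoch_lb r)%R.
Proof. apply exp_pos. Qed.

Lemma Cmod_inv_qpoch_le k : (0 <= / Cmod (qpoch q k) <= / qpoch_lb r)%R.
Proof.
  pose proof (Cmod_qpoch_ge k). pose proof qpoch_lb_pos.
  split; [apply Rlt_le, Rinv_0_lt_compat; lra | apply Rinv_le_contravar; lra].
Qed.

Lemma Cmod_qpoch_inv_diff_le n k : (0 <= Cmod (qpoch_inv_diff q n k) <= / qpoch_lb r)%R.
Proof.
  split; [apply Cmod_ge_0|]. unfold qpoch_inv_diff. destruct (Nat.leb k n).
  - rewrite Cmod_inv by apply qpoch_neq0. apply Cmod_inv_qpoch_le.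
  - rewrite Cmod_0. apply Rlt_le, Rinv_0_lt_compat, qpoch_lb_pos.
Qed.

Lemma Cmod_lhs_term_le j m n k : (Cmod (lhs_term q j m n k) <= / qpoch_lb r ^ 3 * r ^ k)%R.
Proof.
  pose proof qpoch_lb_pos.
  replace (/ qpoch_lb r ^ 3 * r ^ k)%R
    with (r ^ k * / qpoch_lb r * / qpoch_lb r * / qpoch_lb r)%R by (field; lra).
  unfold lhs_term. rewrite !Cmod_mult, Cmod_div, Cmod_Cpown by apply qpoch_neq0.
  unfold Rdiv.
  repeat apply Rmult_le_compat_nonneg;
    auto using Cmod_inv_qpoch_le, Cmod_qpoch_inv_diff_le.
  apply pow_Cmod_le. nia.
Qed.

Lemma Cmod_rhs_term_le j m n k :
  (Cmod (rhs_term q j m n k) <= qpoch_ub r / qpoch_lb r ^ 3 * r ^ k)%R.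
Proof.
  pose proof qpoch_lb_pos.
  replace (qpoch_ub r / qpoch_lb r ^ 3 * r ^ k)%R
    with (r ^ k * qpoch_ub r * (/ qpoch_lb r * / qpoch_lb r * / qpoch_lb r))%R by (field; lra).
  unfold rhs_term.
  rewrite Cmod_div by (repeat apply Cmult_neq_0; apply qpoch_neq0).
  rewrite !Cmod_mult, Cmod_Cpown. unfold Rdiv. rewrite !Rinv_mult.
  repeat apply Rmult_le_compat_nonneg; auto using Cmod_inv_qpoch_le.
  - apply pow_Cmod_le. nia.
  - split; [apply Cmod_ge_0 | apply Cmod_qpoch_le].
Qed.

Lemma is_series_lhs_term j m n : is_series (lhs_term q j m n) (Csum (lhs_term q j m n)).
Proof.
  apply is_series_Csum, (ex_series_geom_dominated _ (/ qpoch_lb r ^ 3) r).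
  - split; [apply Cmod_ge_0 | lra].
  - apply Cmod_lhs_term_le.
Qed.

Lemma is_series_rhs_term j m n : is_series (rhs_term q j m n) (Csum (rhs_term q j m n)).
Proof.
  apply is_series_Csum, (ex_series_geom_dominated _ (qpoch_ub r / qpoch_lb r ^ 3) r).
  - split; [apply Cmod_ge_0 | lra].
  - apply Cmod_rhs_term_le.
Qed.

Lemma ex_series_rhs_rec1_defect m n : ex_series (rhs_rec1_defect m n).
Proof.
  apply (ex_series_geom_dominated _ (2 * (qpoch_ub r / qpoch_lb r ^ 3)) r).
  { split; [apply Cmod_ge_0 | lra]. }
  intros k. unfold rhs_rec1_defect. rewrite !Cmod_mult, Cmod_Cpown.
  pose proof (Cmod_one_sub_le (Cpown q k)) as H1. rewrite Cmod_Cpown in H1.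
  replace (2 * (qpoch_ub r / qpoch_lb r ^ 3) * r ^ k)%R
    with (1 * 2 * (qpoch_ub r / qpoch_lb r ^ 3 * r ^ k))%R by ring.
  repeat apply Rmult_le_compat_nonneg.
  - split; [apply pow_le, Cmod_ge_0 | apply (pow_Cmod_le 0); lia].
  - split; [apply Cmod_ge_0|]. pose proof (pow_Cmod_le 0 k (Nat.le_0_l k)). simpl in *. lra.
  - split; [apply Cmod_ge_0 | apply Cmod_rhs_term_le].
Qed.

Lemma is_series_durfee_term N : forall j, is_series (durfee_term q j N) (/ qpoch q (N + j)).
Proof.
  induction N as [|N IH]; intros j.
  - replace (/ qpoch q (0 + j)) with (durfee_term q j 0 0).
    + apply is_series_single. intros k. apply durfee_term_gt. lia.
    + unfold durfee_term. rewrite qpoch_inv_diff_0. qpoch_field.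
  - replace (/ qpoch q (S N + j))
      with (/ qpoch q (N + j) + Cpown q (S (N + j)) * / qpoch q (N + S j)) by qpoch_field.
    eapply is_series_ext; [intros k; symmetry; apply durfee_term_S|].
    apply is_series_Cplus, is_series_Cmult_l, is_series_shift1; apply IH.
Qed.

Lemma Cmod_qpoch_sub_le M d :
  (Cmod (qpoch q (M + d) - qpoch q M) <= qpoch_ub r * r ^ S M / (1 - r))%R.
Proof.
  enough (H : (Cmod (qpoch q (M + d) - qpoch q M)
                <= qpoch_ub r * r ^ S M * (1 - r ^ d) / (1 - r))%R).
  { eapply Rle_trans; [exact H|]. unfold Rdiv. apply Rmult_le_compat_r.
    - apply Rlt_le, Rinv_0_lt_compat. lra.
    - rewrite <- (Rmult_1_r (qpoch_ub r * r ^ S M)) at 2. apply Rmult_le_compat_l.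
      + apply Rmult_le_pos; [apply Rlt_le, exp_pos | apply pow_le, Cmod_ge_0].
      + pose proof (pow_le r d (Cmod_ge_0 q)). lra. }
  induction d as [|d IH].
  - rewrite Nat.add_0_r. replace (qpoch q M - qpoch q M) with (RtoC 0) by ring.
    rewrite Cmod_0. right. simpl. field. lra.
  - rewrite Nat.add_succ_r, qpoch_S.
    replace (qpoch q (M + d) * (1 - Cpown q (S (M + d))) - qpoch q M)
      with ((qpoch q (M + d) - qpoch q M) + - (qpoch q (M + d) * Cpown q (S (M + d)))) by ring.
    eapply Rle_trans; [apply Cmod_triangle|].
    rewrite Cmod_opp, Cmod_mult, Cmod_Cpown.
    eapply Rle_trans.
    { apply Rplus_le_compat; [exact IH|].
      apply Rmult_le_compat_r; [apply pow_le, Cmod_ge_0 | apply Cmod_qpoch_le]. }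
    right. replace (S (M + d)) with (S M + d)%nat by lia. rewrite pow_add. simpl. field. lra.
Qed.

Definition qpoch_increment (k : nat) : C :=
  match k with O => 1 | S k' => qpoch q (S k') - qpoch q k' end.

Lemma qpoch_inf_exists : exists P, is_qpoch_inf q P.
Proof.
  assert (Hinc : ex_series qpoch_increment).
  { apply (ex_series_geom_dominated _ (qpoch_ub r) r); [split; [apply Cmod_ge_0 | lra]|].
    intros [|k].
    - change (Cmod 1 <= qpoch_ub r * 1)%R. rewrite Cmod_1, Rmult_1_r.
      pose proof (exp_ineq1_le (r / (1 - r))).
      assert (0 <= r / (1 - r))%R by (apply Rdiv_le_0_compat; lra). unfold qpoch_ub. lra.
    - change (Cmod (qpoch q (S k) - qpoch q k) <= qpoch_ub r * r ^ S k)%R.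
      replace (qpoch q (S k) - qpoch q k) with (- (qpoch q k * Cpown q (S k)))
        by (rewrite qpoch_S; ring).
      rewrite Cmod_opp, Cmod_mult, Cmod_Cpown.
      apply Rmult_le_compat_r; [apply pow_le, Cmod_ge_0 | apply Cmod_qpoch_le]. }
  destruct Hinc as [P HP]. exists P.
  apply (filterlim_ext (sum_n qpoch_increment)); [|exact HP].
  intros N. induction N as [|N IH]; [now rewrite sum_O|].
  rewrite sum_Sn, IH. change (qpoch q N + (qpoch q (S N) - qpoch q N) = qpoch q (S N)). ring.
Qed.

Lemma Cmod_durfee_sub_rhs_le N k : (k <= N)%nat ->
  (Cmod (durfee_term q 0 N k - rhs_term q 0 0 0 k)
     <= qpoch_ub r / (qpoch_lb r ^ 3 * (1 - r)) * r ^ N * r ^ k)%R.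
Proof.
  intros Hk. destruct (Nat.le_exists_sub k N Hk) as [M [-> _]].
  replace (durfee_term q 0 (M + k) k - rhs_term q 0 0 0 k)
    with (Cpown q (k * k) * / qpoch q k * / qpoch q k * (qpoch q (M + k) - qpoch q M)
          * / qpoch q M)
    by (unfold durfee_term, rhs_term; rewrite qpoch_inv_diff_add; qpoch_field).
  rewrite !Cmod_mult, Cmod_Cpown, !Cmod_inv by apply qpoch_neq0.
  pose proof qpoch_lb_pos. pose proof (exp_pos (r / (1 - r))).
  apply Rle_trans with
    (r ^ (k * k) * / qpoch_lb r * / qpoch_lb r * (qpoch_ub r * r ^ S M / (1 - r)) * / qpoch_lb r)%R.
  - repeat apply Rmult_le_compat_nonneg; auto using Cmod_inv_qpoch_le.
    + split; [apply pow_le, Cmod_ge_0 | lra].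
    + split; [apply Cmod_ge_0 | apply Cmod_qpoch_sub_le].
  - replace (r ^ (k * k) * / qpoch_lb r * / qpoch_lb r * (qpoch_ub r * r ^ S M / (1 - r))
               * / qpoch_lb r)%R
      with (qpoch_ub r / (qpoch_lb r ^ 3 * (1 - r)) * (r ^ (k * k) * r ^ S M))%R
      by (field; lra).
    rewrite Rmult_assoc, <- !pow_add.
    apply Rmult_le_compat_l; [unfold qpoch_ub; apply Rlt_le, Rdiv_lt_0_compat; [apply exp_pos|]|].
    + apply Rmult_lt_0_compat; [apply pow_lt|]; lra.
    + apply pow_Cmod_le. nia.
Qed.

Lemma durfee_identity P : is_qpoch_inf q P -> P * Csum (rhs_term q 0 0 0) = 1.
Proof.
  intros HP.
  set (K := (qpoch_ub r / (qpoch_lb r ^ 3 * (1 - r)))%R).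
  assert (Hfinite : forall N, / qpoch q N = sum_n (durfee_term q 0 N) N).
  { intros N. pose proof (is_series_durfee_term N 0) as H. rewrite Nat.add_0_r in H.
    apply (is_series_C_unique _ _ _ H), is_series_finite. intros k. apply durfee_term_gt. }
  assert (Hinv : filterlim (fun N => / qpoch q N) eventually (locally (Csum (rhs_term q 0 0 0)))).
  { apply (filterlim_geom_close _ (sum_n (rhs_term q 0 0 0)) _ (K / (1 - r)) r).
    - lra.
    - apply is_series_rhs_term.
    - intros N. rewrite Hfinite, <- sum_n_Cminus.
      replace (K / (1 - r) * r ^ N)%R with (K * r ^ N / (1 - r))%R by (field; lra).
      apply Cmod_sum_n_le; [lra|]. intros k Hk.
      now apply Cmod_durfee_sub_rhs_le. }
  assert (Hone : filterlim (fun N => qpoch q N * / qpoch q N) eventually (locally (RtoC 1))).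
  { apply (filterlim_ext (fun _ => RtoC 1)); [|apply filterlim_const].
    intros N. field. apply qpoch_neq0. }
  exact (filterlim_locally_unique _ _ _ (filterlim_Cmult _ _ _ _ HP Hinv) Hone).
Qed.

Record solves_recurrence (F : nat -> nat -> nat -> C) : Prop := {
  recurrence_0 : forall m n,
    F 0%nat (S m) (S n) = F 0%nat m (S n) + Cpown q (S m) * (1 - Cpown q (S n)) * F 1%nat m n;
  recurrence_1 : forall m n,
    F 1%nat m (S n) = Cpown q (S n) * F 0%nat m (S n) + (1 - Cpown q (S n)) * F 1%nat m n;
  boundary_m0 : forall m, F 0%nat m 0%nat = 1 /\ F 1%nat m 0%nat = 1;
  boundary_0n : forall n, F 0%nat 0%nat n = 1 /\ F 1%nat 0%nat n = 1 }.

Lemma solves_recurrence_unique F G : solves_recurrence F -> solves_recurrence G ->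
  forall m n, F 0%nat m n = G 0%nat m n /\ F 1%nat m n = G 1%nat m n.
Proof.
  intros HF HG. induction m as [|m IHm]; intros n.
  - destruct (boundary_0n F HF n), (boundary_0n G HG n). split; congruence.
  - induction n as [|n IHn].
    + destruct (boundary_m0 F HF (S m)), (boundary_m0 G HG (S m)). split; congruence.
    + assert (E0 : F 0%nat (S m) (S n) = G 0%nat (S m) (S n)).
      { rewrite (recurrence_0 F HF), (recurrence_0 G HG), (proj1 (IHm (S n))), (proj2 (IHm n)).
        reflexivity. }
      split; [exact E0|].
      rewrite (recurrence_1 F HF), (recurrence_1 G HG), E0, (proj2 IHn). reflexivity.
Qed.

Definition lhs_value (j m n : nat) : C := qpoch q m * qpoch q n * Csum (lhs_term q j m n).

Definition rhs_value (P : C) (j m n : nat) : C := P * Csum (rhs_term q j m n).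

Lemma lhs_value_rec0 m n :
  lhs_value 0 (S m) (S n)
  = lhs_value 0 m (S n) + Cpown q (S m) * (1 - Cpown q (S n)) * lhs_value 1 m n.
Proof.
  assert (E : (1 - Cpown q (S m)) * Csum (lhs_term q 0 (S m) (S n))
              = Csum (lhs_term q 0 m (S n)) + Cpown q (S m) * Csum (lhs_term q 1 m n)).
  { apply (is_series_C_unique (fun k => (1 - Cpown q (S m)) * lhs_term q 0 (S m) (S n) k)).
    - apply is_series_Cmult_l, is_series_lhs_term.
    - eapply is_series_ext; [intros k; symmetry; apply lhs_term_rec0|].
      apply is_series_Cplus, is_series_Cmult_l, is_series_shift1; apply is_series_lhs_term. }
  unfold lhs_value. rewrite !qpoch_S.
  transitivity (qpoch q m * (qpoch q n * (1 - Cpown q (S n)))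
                * ((1 - Cpown q (S m)) * Csum (lhs_term q 0 (S m) (S n)))); [ring|].
  rewrite E. ring.
Qed.

Lemma lhs_value_rec1 m n :
  lhs_value 1 m (S n)
  = Cpown q (S n) * lhs_value 0 m (S n) + (1 - Cpown q (S n)) * lhs_value 1 m n.
Proof.
  unfold lhs_value.
  rewrite (Csum_eq (lhs_term q 1 m (S n))
             (Cpown q (S n) * Csum (lhs_term q 0 m (S n)) + Csum (lhs_term q 1 m n))).
  - rewrite (qpoch_S q n). ring.
  - eapply is_series_ext; [intros k; symmetry; apply lhs_term_rec1|].
    apply is_series_Cplus, is_series_lhs_term; apply is_series_Cmult_l, is_series_lhs_term.
Qed.

Lemma lhs_value_boundary j m : lhs_value j m 0 = 1 /\ lhs_value j 0 m = 1.
Proof.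
  unfold lhs_value.
  rewrite (Csum_eq (lhs_term q j m 0) (lhs_term q j m 0 0)),
          (Csum_eq (lhs_term q j 0 m) (lhs_term q j 0 m 0)).
  - unfold lhs_term. rewrite !qpoch_inv_diff_0. split; qpoch_field.
  - apply is_series_single. intros k. unfold lhs_term.
    rewrite (qpoch_inv_diff_gt q 0 (S k)) by lia. ring.
  - apply is_series_single. intros k. unfold lhs_term.
    rewrite (qpoch_inv_diff_gt q 0 (S k)) by lia. ring.
Qed.

Lemma rhs_value_rec0 P m n :
  rhs_value P 0 (S m) (S n)
  = rhs_value P 0 m (S n) + Cpown q (S m) * (1 - Cpown q (S n)) * rhs_value P 1 m n.
Proof.
  unfold rhs_value.
  rewrite (Csum_eq (rhs_term q 0 (S m) (S n))
             (Csum (rhs_term q 0 m (S n))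
              + Cpown q (S m) * (1 - Cpown q (S n)) * Csum (rhs_term q 1 m n))); [ring|].
  eapply is_series_ext; [intros k; symmetry; apply rhs_term_rec0|].
  apply is_series_Cplus, is_series_Cmult_l; apply is_series_rhs_term.
Qed.

Lemma rhs_value_rec1 P m n :
  rhs_value P 1 m (S n)
  = Cpown q (S n) * rhs_value P 0 m (S n) + (1 - Cpown q (S n)) * rhs_value P 1 m n.
Proof.
  unfold rhs_value.
  rewrite (Csum_eq (rhs_term q 1 m (S n))
             (Cpown q (S n) * Csum (rhs_term q 0 m (S n))
              + (1 - Cpown q (S n)) * Csum (rhs_term q 1 m n) + 0)); [ring|].
  eapply is_series_ext; [intros k; symmetry; apply rhs_term_rec1|].
  apply is_series_Cplus; [apply is_series_Cplus; apply is_series_Cmult_l, is_series_rhs_term|].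
  apply is_series_telescope; [apply ex_series_rhs_rec1_defect|].
  unfold rhs_rec1_defect. simpl. ring.
Qed.

Lemma rhs_value_n0 P j m : rhs_value P j m 0 = rhs_value P j 0 0.
Proof.
  unfold rhs_value. f_equal. apply Csum_eq.
  eapply is_series_ext; [intros k; symmetry; apply rhs_term_n0 | apply is_series_rhs_term].
Qed.

Lemma rhs_value_0n P j n : rhs_value P j 0 n = rhs_value P j 0 0.
Proof.
  unfold rhs_value. f_equal. apply Csum_eq.
  eapply is_series_ext; [intros k; symmetry; apply rhs_term_0n | apply is_series_rhs_term].
Qed.

Lemma rhs_value_00 P : is_qpoch_inf q P -> rhs_value P 0 0 0 = 1 /\ rhs_value P 1 0 0 = 1.
Proof.
  intros HP. assert (H0 : rhs_value P 0 0 0 = 1) by exact (durfee_identity P HP).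
  split; [exact H0|].
  pose proof (rhs_value_rec1 P 0 0) as E.
  rewrite (rhs_value_0n P 1 1), (rhs_value_0n P 0 1), H0 in E.
  set (x := rhs_value P 1 0 0) in *.
  assert (Hqx : q * (x - 1) = 0).
  { transitivity (x - (Cpown q 1 * 1 + (1 - Cpown q 1) * x)); [simpl; ring|].
    rewrite <- E. ring. }
  replace x with (/ q * (q * (x - 1)) + 1) by (field; exact q_neq0).
  rewrite Hqx. ring.
Qed.

Lemma solves_recurrence_lhs_value : solves_recurrence lhs_value.
Proof.
  split.
  - apply lhs_value_rec0.
  - apply lhs_value_rec1.
  - intros m. split; apply lhs_value_boundary.
  - intros n. split; apply lhs_value_boundary.
Qed.

Lemma solves_recurrence_rhs_value P : is_qpoch_inf q P -> solves_recurrence (rhs_value P).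
Proof.
  intros HP. split.
  - apply rhs_value_rec0.
  - apply rhs_value_rec1.
  - intros m. rewrite (rhs_value_n0 P 0 m), (rhs_value_n0 P 1 m). now apply rhs_value_00.
  - intros n. rewrite (rhs_value_0n P 0 n), (rhs_value_0n P 1 n). now apply rhs_value_00.
Qed.

Lemma lhs_rhs_series_identity j m n : (j <= 1)%nat ->
  exists P S1 S2 : C,
    is_qpoch_inf q P /\ is_series (lhs_term q j m n) S1 /\ is_series (rhs_term q j m n) S2 /\
    / P * S1 = / (qpoch q m * qpoch q n) * S2.
Proof.
  intros Hj. destruct qpoch_inf_exists as [P HP].
  exists P, (Csum (lhs_term q j m n)), (Csum (rhs_term q j m n)).
  split; [exact HP|]. split; [apply is_series_lhs_term|]. split; [apply is_series_rhs_term|].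
  assert (HP0 : P <> 0).
  { intros E. pose proof (durfee_identity P HP) as H. rewrite E, Cmult_0_l in H.
    apply RtoC_inj in H. lra. }
  assert (E : lhs_value j m n = rhs_value P j m n).
  { destruct (solves_recurrence_unique _ _ solves_recurrence_lhs_value
                (solves_recurrence_rhs_value P HP) m n).
    destruct j as [|[|j]]; [assumption | assumption | lia]. }
  unfold lhs_value, rhs_value in E.
  pose proof (qpoch_neq0 m). pose proof (qpoch_neq0 n).
  replace (Csum (lhs_term q j m n)) with (P * Csum (rhs_term q j m n) / (qpoch q m * qpoch q n))
    by (rewrite <- E; field; auto).
  field. auto.
Qed.

End Pochhammer.

Theorem mainTheorem14 (q : C) (hq : (0 < Cmod q < 1)%R) (m n : nat) :
  (exists Pinf S1 S2 : C,
     is_qpoch_inf q Pinf /\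
     is_series (fun k : nat =>
        Cpown q (k * k) / qpoch q k * qpoch_inv_diff q n k * qpoch_inv_diff q m k) S1 /\
     is_series (fun k : nat =>
        Cpown q (k * k) * qpoch q (m + n + k)
          / (qpoch q k * qpoch q (m + k) * qpoch q (n + k))) S2 /\
     / Pinf * S1 = / (qpoch q m * qpoch q n) * S2)
  /\
  (exists Pinf S1 S2 : C,
     is_qpoch_inf q Pinf /\
     is_series (fun k : nat =>
        Cpown q (k * k + k) / qpoch q k * qpoch_inv_diff q n k * qpoch_inv_diff q m k) S1 /\
     is_series (fun k : nat =>
        Cpown q (k * k + k) * qpoch q (m + n + k + 1)
          / (qpoch q k * qpoch q (m + k + 1) * qpoch q (n + k + 1))) S2 /\
     / Pinf * S1 = / (qpoch q m * qpoch q n) * S2).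
Proof.
  split.
  - destruct (lhs_rhs_series_identity q hq 0 m n (Nat.le_0_l 1))
      as (P & S1 & S2 & HP & H1 & H2 & E).
    exists P, S1, S2. repeat split; [exact HP | | | exact E].
    + eapply is_series_ext; [|exact H1]. intros k. unfold lhs_term. now rewrite Nat.add_0_r.
    + eapply is_series_ext; [|exact H2]. intros k. unfold rhs_term. now rewrite !Nat.add_0_r.
  - destruct (lhs_rhs_series_identity q hq 1 m n (Nat.le_refl 1))
      as (P & S1 & S2 & HP & H1 & H2 & E).
    exists P, S1, S2. repeat split; [exact HP | | | exact E].
    + eapply is_series_ext; [|exact H1]. intros k. unfold lhs_term. now rewrite Nat.mul_1_l.
    + eapply is_series_ext; [|exact H2]. intros k. unfold rhs_term. now rewrite Nat.mul_1_l.
Qed.
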